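(* Let $q\in\mathbb{C}^\times$ and $t,k\in\mathbb{Z}_{>0}$. Then: (i) $p_t(q)(x_1,\dots,x_k)=p_t(q)(x_1,\dots,x_{k-1})+q^{-1}x_k^t+q^{-1}(q-q^{-1})\sum_{z=1}^{t-1}p_z(q)(x_1,\dots,x_{k-1})x_k^{t-z}$; (ii) $p_t(q)(x_1,\dots,x_k)=(-1)^{t-1}q^{-t}[t]e_t(x_1,\dots,x_k)+\sum_{z=1}^{t-1}(-1)^{t+z-1}p_z(q)(x_1,\dots,x_k)e_{t-z}(x_1,\dots,x_k)$; (iii) $p_{k+t}(q)(x_1,\dots,x_k)=\sum_{z=0}^{k-1}(-1)^{k+z-1}p_{t+z}(q)(x_1,\dots,x_k)e_{k-z}(x_1,\dots,x_k)$.
   Context: $[t]=(q^t-q^{-t})/(q-q^{-1})$ (interpreted as $t$ when $q^2=1$). For $t>0$ and $k\ge0$, $p_t(q)(x_1,\dots,x_k)=\sum_{\lambda\vdash t,\ \ell(\lambda)\le k}q^{-\ell(\lambda)}(q-q^{-1})^{\ell(\lambda)-1}m_\lambda(x_1,\dots,x_k)$, where $\lambda$ runs over partitions of $t$ with at most $k$ nonzero parts and $m_\lambda$ is the monomial symmetric polynomial (so $p_t(q)$ of zero variables is $0$). $e_t$ denotes the elementary symmetric polynomial, $e_0=1$, $e_t=0$ for $t>k$. *)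

From HB Require Import structures.
From mathcomp Require Import all_boot all_order all_algebra.
From mathcomp Require Export mpoly.
Set Implicit Arguments. Unset Strict Implicit. Unset Printing Implicit Defensive.
Import Order.TTheory GRing.Theory Num.Theory.
Local Open Scope ring_scope.

Definition mseq (n : nat) (m : 'X_{1..n}) : seq nat := [seq m i | i <- enum 'I_n].

(* A partition lambda of t with at most n nonzero parts is represented by the
   nonincreasing exponent vector (lambda_1, ..., lambda_n) (padded with zeros). *)
Definition is_partition (n t : nat) (l : 'X_{1..n}) : bool :=
  sorted geq (mseq l) && (mdeg l == t).

Definition plength (n : nat) (l : 'X_{1..n}) : nat := count (fun a => 0 < a)%N (mseq l).

Definition msymm (R : ringType) (n : nat) (l : 'X_{1..n}) : {mpoly R[n]} :=
  \sum_(a : 'X_{1..n < (mdeg l).+1} | perm_eq (mseq a) (mseq l)) 'X_[bmnm a].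

Definition pq (R : fieldType) (q : R) (t n : nat) : {mpoly R[n]} :=
  \sum_(l : 'X_{1..n < t.+1} | is_partition t (bmnm l))
     ((q^-1) ^+ plength (bmnm l) * (q - q^-1) ^+ (plength (bmnm l)).-1) *: msymm R (bmnm l).

(* quantum integer [t] = q^{t-1} + q^{t-3} + ... + q^{1-t}
   (= (q^t - q^{-t})/(q - q^{-1}) when q^2 <> 1) *)
Definition qint (R : fieldType) (q : R) (t : nat) : R :=
  \sum_(j < t) q ^ (t%:Z - 1 - 2 * (j : nat)%:Z).

From HB Require Import structures.
From mathcomp Require Import all_boot all_order all_algebra.
From mathcomp Require Import mpoly.
From mathcomp Require Import ring zify.
Set Implicit Arguments. Unset Strict Implicit. Unset Printing Implicit Defensive.
Import Order.TTheory GRing.Theory Num.Theory.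
Local Open Scope ring_scope.

(* The coefficient of a monomial x^m in p_t(q) only depends on the degree |m| and
   on the number l of nonzero exponents of m: it is q^-l (q - q^-1)^(l-1) if |m| = t
   and 0 otherwise.  Splitting off the exponent of x_k turns (i) into an identity
   between these weights.

   For (ii) and (iii) let P_k = sum_(t>0) p_t X^t, E_k = sum_t (-1)^t e_t X^t
   = prod_i (1 - x_i X) and D_k = sum_t (-1)^(t-1) q^-t [t] e_t X^t.  By (i),
   P_k = P_(k-1) + (1 + (q - q^-1) P_(k-1)) Y where Y (1 - x_k X) = q^-1 x_k X, and
   E_k = E_(k-1) (1 - x_k X), so that
     P_k E_k = P_(k-1) E_(k-1) (1 - x_k X) + (E_(k-1) + (q - q^-1) P_(k-1) E_(k-1)) q^-1 x_k X.
   Since q^-(t+1) [t+1] = q^-1 + q^-2 q^-t [t], induction on k gives P_k E_k = D_k.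
   Its coefficient of X^t is (ii); in degree k + t, where e_(k+t) = 0, it is (iii).
   The power series are polynomials compared up to a fixed order N. *)

Section ExponentSequences.
Variable n : nat.
Implicit Types m l : 'X_{1..n}.

Lemma size_mseq m : size (mseq m) = n.
Proof. by rewrite size_map size_enum_ord. Qed.

Lemma nth_mseq m (i : 'I_n) : nth 0%N (mseq m) i = m i.
Proof. by rewrite (nth_map i) ?size_enum_ord // nth_ord_enum. Qed.

Lemma mseq_inj : injective (@mseq n).
Proof. by move=> m l e; apply/mnmP => i; rewrite -!nth_mseq e. Qed.

Lemma mseq_multinom (s : seq nat) : size s = n ->
  mseq [multinom nth 0%N s i | i < n] = s.
Proof.
move=> hs; apply: (@eq_from_nth _ 0%N) => [|j]; rewrite size_mseq // => hj.
by rewrite (nth_mseq _ (Ordinal hj)) mnmE.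
Qed.

Lemma mdeg_mseq m : mdeg m = sumn (mseq m).
Proof. by rewrite mdegE sumnE big_map big_enum. Qed.

Lemma mdeg_perm m l : perm_eq (mseq m) (mseq l) -> mdeg m = mdeg l.
Proof. by rewrite !mdeg_mseq => /perm_sumn. Qed.

Lemma plength_perm m l : perm_eq (mseq m) (mseq l) -> plength m = plength l.
Proof. by move=> /permP h; rewrite /plength h. Qed.

Lemma plength_eq0 m : (plength m == 0%N) = (mdeg m == 0%N).
Proof. by rewrite /plength mdeg_mseq; elim: (mseq m) => //= -[|x] s. Qed.

Definition msort m : 'X_{1..n} := [multinom nth 0%N (sort geq (mseq m)) i | i < n].

Lemma mseq_msort m : mseq (msort m) = sort geq (mseq m).
Proof. by rewrite mseq_multinom // size_sort size_mseq. Qed.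

Lemma perm_msort m : perm_eq (mseq (msort m)) (mseq m).
Proof. by rewrite mseq_msort perm_sort. Qed.

Lemma is_partition_msort m : is_partition (mdeg m) (msort m).
Proof.
rewrite /is_partition (mdeg_perm (perm_msort m)) eqxx andbT mseq_msort.
by apply: sort_sorted => x y; apply: leq_total.
Qed.

Lemma partition_msort t m l :
  is_partition t l -> perm_eq (mseq m) (mseq l) -> l = msort m.
Proof.
move=> /andP[sorted_l _] perm_ml; apply: mseq_inj; rewrite mseq_msort.
apply: (sorted_eq (leT := geq)) => //.
- by move=> x y z /= h1 h2; apply: leq_trans h2 h1.
- by move=> x y /andP[h1 h2]; apply/eqP; rewrite eqn_leq; apply/andP.
- by apply: sort_sorted => x y; apply: leq_total.
by rewrite perm_sym perm_sort.
Qed.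

End ExponentSequences.

Lemma mcoeff_msymm (R : ringType) n (l m : 'X_{1..n}) :
  (msymm R l)@_m = (perm_eq (mseq m) (mseq l))%:R.
Proof.
rewrite raddf_sum /=; under eq_bigr do rewrite mcoeffX.
have [perm_ml|not_perm] := boolP (perm_eq _ _); last first.
  by rewrite big1 // => a perm_al; case: eqP => // e; rewrite -e perm_al in not_perm.
have m_lt : (mdeg m < (mdeg l).+1)%N by rewrite ltnS (mdeg_perm perm_ml).
rewrite (bigD1 (BMultinom m_lt)) //= eqxx big1 ?addr0 // => a /andP[_ ne_am].
by case: eqP => // e; case/eqP: ne_am; apply/val_inj.
Qed.

Definition pq_weight (R : fieldType) (q : R) (s : nat) : R :=
  q^-1 ^+ s * (q - q^-1) ^+ s.-1.

Lemma mcoeff_pq (R : fieldType) (q : R) t n (m : 'X_{1..n}) :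
  (pq q t n)@_m = (mdeg m == t)%:R * pq_weight q (plength m).
Proof.
rewrite raddf_sum /= (eq_bigr (fun l : 'X_{1..n < t.+1} =>
  if perm_eq (mseq m) (mseq l) then pq_weight q (plength m) else 0)) => [|l _]; last first.
  by rewrite mcoeffZ mcoeff_msymm mulr_natr mulrb; case: ifP => // /plength_perm ->.
rewrite -big_mkcondr /=.
have [deg_m|deg_m] := eqVneq (mdeg m) t; last first.
  rewrite big_pred0 ?mul0r // => l; apply/negP => /andP[/andP[_ /eqP deg_l] perm_ml].
  by rewrite (mdeg_perm perm_ml) deg_l eqxx in deg_m.
have sort_lt : (mdeg (msort m) < t.+1)%N.
  by rewrite (mdeg_perm (perm_msort m)) deg_m.
rewrite (big_pred1 (BMultinom sort_lt)) ?mul1r ?sumr_const ?card_ord // => l /=.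
apply/andP/eqP => [[part_l perm_ml]|->]; first exact/val_inj/(partition_msort part_l).
by rewrite -[in X in is_partition X]deg_m is_partition_msort perm_sym perm_msort.
Qed.

Section LastVariable.
Variable n : nat.
Implicit Types m : 'X_{1..n.+1}.

Definition mnmrestr m : 'X_{1..n} := [multinom m (widen_ord (leqnSn n) i) | i < n].

Lemma mseq_restr m : mseq m = rcons (mseq (mnmrestr m)) (m ord_max).
Proof.
rewrite {1}/mseq enum_ordSr map_rcons -map_comp; congr rcons.
by apply: eq_map => i /=; rewrite mnmE.
Qed.

Lemma mdeg_restr m : mdeg m = (mdeg (mnmrestr m) + m ord_max)%N.
Proof. by rewrite !mdeg_mseq mseq_restr -cats1 sumn_cat /= addn0. Qed.

Lemma plength_restr m : plength m = (plength (mnmrestr m) + (0 < m ord_max))%N.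
Proof. by rewrite /plength mseq_restr -cats1 count_cat /= addn0. Qed.

Lemma mnmwiden_restr m : m = (mnmwiden (mnmrestr m) + U_(ord_max) *+ m ord_max)%MM.
Proof.
apply/mnmP => i; rewrite mnmDE mulmnE mnm1E.
case: (unliftP ord_max i) => [j ->|->]; last by rewrite mnmwiden_ordmax eqxx mul1n.
rewrite (negbTE (neq_lift _ _)) mul0n addn0.
have -> : lift ord_max j = widen_ord (leqnSn n) j.
  by apply: val_inj; rewrite /= /bump leqNgt ltn_ord.
by rewrite mnmwiden_widen mnmE.
Qed.

Lemma mcoeff_mwidenMXmax (R : comRingType) (p : {mpoly R[n]}) j m :
  (mwiden p * 'X_ord_max ^+ j)@_m = (m ord_max == j)%:R * p@_(mnmrestr m).
Proof.
rewrite mpolyXn; have [<-|ne_j] := eqVneq (m ord_max) j.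
  by rewrite {1}(mnmwiden_restr m) addmC mcoeffMX mwiden_mnmwiden mul1r.
rewrite mul0r (mwidenE (leqnn _)) mulr_suml raddf_sum big1 // => b _.
rewrite /= -scalerAl -mpolyXD mcoeffZ mcoeffX; case: eqP => [e|]; last by rewrite mulr0.
by move: ne_j; rewrite -e mnmDE mnmwiden_ordmax mulmnE mnm1E eqxx mul1n eqxx.
Qed.

Lemma mcoeff_mwiden (R : comRingType) (p : {mpoly R[n]}) m :
  (mwiden p)@_m = (m ord_max == 0%N)%:R * p@_(mnmrestr m).
Proof. by rewrite -mcoeff_mwidenMXmax mulr1. Qed.

Lemma mcoeff_Xmax (R : comRingType) j m :
  ('X_ord_max ^+ j : {mpoly R[n.+1]})@_m =
    (m ord_max == j)%:R * (mdeg (mnmrestr m) == 0%N)%:R.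
Proof. by rewrite -[_ ^+ j]mul1r -mwiden1 mcoeff_mwidenMXmax mcoeff1 mdeg_eq0 eq_sym. Qed.

End LastVariable.

Lemma sum_nat_delta (R : ringType) m n k (F : nat -> R) :
  \sum_(m <= z < n) (z == k)%:R * F z = (m <= k < n)%N%:R * F k.
Proof.
have [k_in|k_out] := boolP (m <= k < n)%N.
  rewrite (bigD1_seq k) ?mem_index_iota ?iota_uniq //= eqxx mul1r big1 ?addr0 //.
  by move=> z /negbTE ->; rewrite mul0r.
rewrite mul0r big1_seq // => z; rewrite mem_index_iota.
by have [->|] := eqVneq z k; rewrite ?(negbTE k_out) // mul0r.
Qed.

Section PqRecursion.
Variables (R : fieldType) (q : R).

Lemma pq_weight1 : pq_weight q 1 = q^-1.
Proof. by rewrite /pq_weight expr1 expr0 mulr1. Qed.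

Lemma pq_weightS s : (0 < s)%N ->
  pq_weight q s.+1 = q^-1 * (q - q^-1) * pq_weight q s.
Proof. by case: s => // s _; rewrite /pq_weight !exprS /=; ring. Qed.

(* The coefficient of x^m in (i), with a the exponent of x_k and d, s the degree and
   length of the other exponents. *)
Lemma pq_recr_coef t a d s : (0 < t)%N -> (s == 0%N) = (d == 0%N) ->
  (d + a == t)%N%:R * pq_weight q (s + (0 < a)%N) =
    (a == 0%N)%:R * ((d == t)%:R * pq_weight q s) + q^-1 * ((a == t)%:R * (d == 0%N)%:R)
    + q^-1 * (q - q^-1) * ((0 < t - a < t)%N%:R * ((d == t - a)%N%:R * pq_weight q s)).
Proof.
move=> t_gt0 s_eq0; have [->|a_gt0] := posnP a.
  rewrite !addn0 subn0 ltnn andbF (eq_sym 0%N) (gtn_eqF t_gt0).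
  by rewrite !(mul0r, mulr0, addr0, mul1r).
rewrite addn1 /= !(mul0r, add0r).
have [d0|d_gt0] := posnP d.
  move: s_eq0; rewrite d0 eqxx => /eqP ->; rewrite pq_weight1 add0n.
  have -> : (0 < t - a < t)%N%:R * ((0%N == t - a)%N%:R * pq_weight q 0) = 0 :> R.
    by rewrite (eq_sym 0%N); case: (posnP (t - a)) => [->|_]; rewrite ?mul0r ?mulr0.
  by rewrite mulr0 addr0 mulr1 mulrC.
have s_gt0 : (0 < s)%N by rewrite lt0n s_eq0 -lt0n.
rewrite mulr0n !mulr0 add0r pq_weightS //.
have [dat|ne] := eqVneq (d + a)%N t.
  have -> : (d == t - a)%N by apply/eqP; lia.
  have -> : (0 < t - a < t)%N by apply/andP; split; lia.
  by rewrite !mul1r mulrA.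
have -> : (d == t - a)%N = false by apply/negbTE/eqP; lia.
by rewrite !(mul0r, mulr0).
Qed.

Lemma pq_recr t n : (0 < t)%N ->
  pq q t n.+1 =
    mwiden (pq q t n) + q^-1 *: 'X_ord_max ^+ t
    + (q^-1 * (q - q^-1)) *: \sum_(1 <= z < t) mwiden (pq q z n) * 'X_ord_max ^+ (t - z).
Proof.
move=> t_gt0; apply/mpolyP => m.
rewrite mcoeff_pq !mcoeffD !mcoeffZ mcoeff_mwiden mcoeff_pq mcoeff_Xmax raddf_sum /=.
rewrite mdeg_restr plength_restr.
set a := m ord_max; set d := mdeg (mnmrestr m); set s := plength (mnmrestr m).
rewrite (eq_big_nat _ _ (F2 := fun z => (z == t - a)%N%:R * ((d == z)%N%:R * pq_weight q s))).
  rewrite sum_nat_delta; apply: pq_recr_coef t_gt0 _; exact: plength_eq0.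
move=> z z_in; rewrite mcoeff_mwidenMXmax mcoeff_pq.
by congr (_%:R * _); apply/eqP/eqP; lia.
Qed.

End PqRecursion.

Section TruncatedEquality.
Variables (R : ringType) (N : nat).

Definition trunc_eq (a b : {poly R}) := forall i, (i <= N)%N -> a`_i = b`_i.

Lemma trunc_eq_refl a : trunc_eq a a.
Proof. by []. Qed.

Lemma trunc_eq_trans a b c : trunc_eq a b -> trunc_eq b c -> trunc_eq a c.
Proof. by move=> ab bc i i_le; rewrite ab ?bc. Qed.

Lemma trunc_eqD a b c d : trunc_eq a b -> trunc_eq c d -> trunc_eq (a + c) (b + d).
Proof. by move=> ab cd i i_le; rewrite !coefD ab ?cd. Qed.

Lemma trunc_eqM a b c d : trunc_eq a b -> trunc_eq c d -> trunc_eq (a * c) (b * d).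
Proof.
move=> ab cd i i_le; rewrite !coefM; apply: eq_bigr => j _.
by rewrite ab ?cd // (leq_trans _ i_le) ?leq_subr // -ltnS.
Qed.

End TruncatedEquality.

Lemma trunc_eq_mpwiden (R : ringType) N n (a b : {poly {mpoly R[n]}}) :
  trunc_eq N a b -> trunc_eq N (mpwiden a) (mpwiden b).
Proof. by move=> ab i i_le; rewrite !coef_map /= ab. Qed.

Section QCoefficients.
Variables (R : fieldType) (q : R).
Hypothesis q_neq0 : q != 0.

Lemma qint0 : qint q 0 = 0.
Proof. by rewrite /qint big_ord0. Qed.

Lemma qintS t : qint q t.+1 = q ^+ t + q^-1 * qint q t.
Proof.
rewrite /qint big_ord_recl mulr_sumr; congr (_ + _).
  by rewrite /= mulr0 subr0 intS addrC addKr.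
apply: eq_bigr => j _; rewrite -exprN1 -expfzDr //; congr (_ ^ _).
by rewrite lift0 !intS; ring.
Qed.

Definition qcoef t : R := (-1) ^+ t.-1 * q ^- t * qint q t.

Lemma qcoef0 : qcoef 0 = 0.
Proof. by rewrite /qcoef qint0 mulr0. Qed.

Lemma qcoefS t : qcoef t.+1 = ((-1) ^+ t + (q - q^-1) * qcoef t) * q^-1 - qcoef t.
Proof.
rewrite /qcoef qintS; case: t => [|t] /=.
  by rewrite qint0 !mulr0 addr0 subr0 !expr0 !mul1r mulr1 expr1.
by rewrite !exprS !mulN1r; field; rewrite expf_eq0 (negbTE q_neq0) andbF.
Qed.

End QCoefficients.

Lemma coef_step_series (R : comRingType) (A E : {poly R}) (a b c : R) i :
  (A * (1 - a%:P * 'X) + (E + c%:P * A) * (b%:P * 'X))`_i =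
  if i is j.+1 then A`_j.+1 - A`_j * a + (E`_j + c * A`_j) * b else A`_0.
Proof.
rewrite mulrBr mulr1 !mulrA coefD coefB !coefMX !coefMC coefD coefCM.
by case: i => [|i]; rewrite ?subr0 ?addr0.
Qed.

Section GeneratingSeries.
Variables (R : fieldType) (q : R).
Hypothesis q_neq0 : q != 0.
Variable N : nat.

Local Notation x := ('X_ord_max : {mpoly R[_]}).
Local Notation c := ((q - q^-1)%:MP%:P : {poly {mpoly R[_]}}).

(* [pq q 0 k] is 1 (empty partition), hence the explicit zero constant term. *)
Definition pq_series k : {poly {mpoly R[k]}} :=
  \poly_(i < N.+1) (if i == 0%N then 0 else pq q i k).

Definition esym_series k : {poly {mpoly R[k]}} :=
  \poly_(i < N.+1) ((-1) ^+ i *: mesym k R i).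

Definition qcoef_series k : {poly {mpoly R[k]}} :=
  \poly_(i < N.+1) (qcoef q i *: mesym k R i).

Definition xmax_series k : {poly {mpoly R[k.+1]}} :=
  \poly_(i < N.+1) (if i == 0%N then 0 else q^-1 *: x ^+ i).

Lemma pq_series0 : pq_series 0 = 0.
Proof.
apply/polyP => i; rewrite coef_poly coef0; case: ifP => // _; case: eqP => // /eqP i_neq0.
apply/mpolyP => m; rewrite mcoeff_pq mcoeff0 mdegE big_ord0.
by rewrite eq_sym (negbTE i_neq0) mul0r.
Qed.

Lemma qcoef_series0 : qcoef_series 0 = 0.
Proof.
apply/polyP => i; rewrite coef_poly coef0; case: ifP => // _.
by case: i => [|i]; rewrite ?qcoef0 ?scale0r // mesym_geqnE ?scaler0.
Qed.

Lemma pq_series_recr k :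
  trunc_eq N (pq_series k.+1)
    (mpwiden (pq_series k) + (1 + c * mpwiden (pq_series k)) * xmax_series k).
Proof.
move=> i i_le; rewrite mulrDl mul1r -mulrA !coefD coefCM coefM /mpwiden coef_map /=.
rewrite !coef_poly ltnS i_le; case: i i_le => [|z] z_le /=.
  by rewrite big_ord1 coef_map /= coef_poly /= mwiden0 !mul0r mulr0 !add0r.
rewrite pq_recr // -addrA big_ord_recr big_ord_recl /= subnn big_add1 big_mkord /=.
rewrite !coef_map !coef_poly /= mwiden0 mul0r mulr0 add0r addr0.
rewrite mul_mpolyC scaler_sumr scaler_sumr; congr (_ + (_ + _)); apply: eq_bigr => j _.
have j_lt := ltn_ord j.
rewrite coef_map /= !coef_poly /bump /= add1n subSS.
rewrite ifT 1?ifT /= 1?ifF //; try lia.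
by rewrite -scalerAr scalerA mulrC.
Qed.

Lemma esym_series_recr k :
  trunc_eq N (esym_series k.+1) (mpwiden (esym_series k) * (1 - x%:P * 'X)).
Proof.
move=> i i_le; rewrite mulrBr mulr1 coefB mulrA coefMX coefMC /mpwiden !coef_map /=.
rewrite !coef_poly ltnS i_le; case: i i_le => [|z] z_le /=.
  by rewrite !expr0 !scale1r !mesym0E mwiden1 subr0.
by rewrite ltnS (ltnW z_le) mesymSS !mwidenZ scalerDr exprS mulN1r !scaleNr -scalerAl.
Qed.

Lemma xmax_seriesM k :
  trunc_eq N (xmax_series k * (1 - x%:P * 'X)) ((q^-1 *: x)%:P * 'X).
Proof.
move=> i i_le; rewrite mulrBr mulr1 coefB mulrA !coefMX coefMC coefC !coef_poly ltnS i_le.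
case: i i_le => [|[|z]] z_le /=; first by rewrite subr0.
  by rewrite mul0r subr0 expr1.
by rewrite ltnS (ltnW z_le) -scalerAl -exprSr subrr.
Qed.

Lemma qcoef_series_recr k :
  trunc_eq N
    (mpwiden (qcoef_series k) * (1 - x%:P * 'X)
     + (mpwiden (esym_series k) + c * mpwiden (qcoef_series k)) * ((q^-1 *: x)%:P * 'X))
    (qcoef_series k.+1).
Proof.
case=> [_|z z_le]; rewrite coef_step_series /mpwiden !coef_map /= !coef_poly.
  by rewrite qcoef0 !scale0r mwiden0.
rewrite !ltnS z_le (ltnW z_le).
rewrite mesymSS !mwidenZ mul_mpolyC scalerA -scalerDl -!scalerAl -scalerAr scalerA.
rewrite scalerDr -addrA; congr (_ + _).
by rewrite (qcoefS q_neq0) scalerDl scaleNr addrC.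
Qed.

Lemma pq_esym_series k : trunc_eq N (pq_series k * esym_series k) (qcoef_series k).
Proof.
elim: k => [|k IH]; first by rewrite pq_series0 qcoef_series0 mul0r.
have IHw : trunc_eq N (mpwiden (pq_series k) * mpwiden (esym_series k))
                      (mpwiden (qcoef_series k)) by rewrite -rmorphM; apply: trunc_eq_mpwiden.
apply: trunc_eq_trans (trunc_eqM (pq_series_recr k) (esym_series_recr k)) _.
have -> : forall (P E Y s u : {poly {mpoly R[k.+1]}}),
    (P + (1 + s * P) * Y) * (E * u) = P * E * u + (E + s * (P * E)) * (Y * u).
  by move=> *; ring.
apply: trunc_eq_trans (qcoef_series_recr k).
apply: trunc_eqD; first exact: trunc_eqM IHw (trunc_eq_refl _).
apply: trunc_eqM (xmax_seriesM k).
exact: trunc_eqD (trunc_eq_refl _) (trunc_eqM (trunc_eq_refl _) IHw).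
Qed.

End GeneratingSeries.

Lemma signr_predD (R : ringType) t z : (z <= t)%N -> (0 < t + z)%N ->
  (-1) ^+ (t + z).-1 = - (-1) ^+ (t - z) :> R.
Proof.
move=> z_le tz_gt0; rewrite -signr_odd -[in RHS]signr_odd oddB // -oddD.
rewrite -[in RHS](prednK tz_gt0) /=.
by case: odd; rewrite ?expr0 ?expr1 ?opprK.
Qed.

Section Newton.
Variables (R : fieldType) (q : R).
Hypothesis q_neq0 : q != 0.

Lemma pq_esym_sum k t : (0 < t)%N ->
  pq q t k + \sum_(1 <= z < t) (-1) ^+ (t - z) *: (pq q z k * mesym k R (t - z)) =
  qcoef q t *: mesym k R t.
Proof.
case: t => // t _; have := pq_esym_series q_neq0 k (leqnn t.+1).
rewrite coefM big_ord_recl big_ord_recr /= subn0 subnn big_add1 big_mkord /=.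
rewrite !coef_poly !ltnSn /= mul0r add0r expr0 scale1r mesym0E mulr1 => <-.
rewrite addrC; congr (_ + _); apply: eq_bigr => j _.
rewrite /bump /= add1n !coef_poly !ltnS (ltnW (ltn_ord j)) leq_subr.
by rewrite -scalerAr.
Qed.

Lemma pq_newton k t : (0 < t)%N ->
  pq q t k = qcoef q t *: mesym k R t
             + \sum_(1 <= z < t) (-1) ^+ (t + z).-1 *: (pq q z k * mesym k R (t - z)).
Proof.
move=> t_gt0.
have -> : \sum_(1 <= z < t) (-1) ^+ (t + z).-1 *: (pq q z k * mesym k R (t - z)) =
          - \sum_(1 <= z < t) (-1) ^+ (t - z) *: (pq q z k * mesym k R (t - z)).
  rewrite -sumrN; apply: eq_big_nat => z /andP[_ z_lt].
  by rewrite (signr_predD _ (ltnW z_lt)) ?scaleNr // addn_gt0 t_gt0.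
by rewrite -(pq_esym_sum k t_gt0) addrK.
Qed.

Lemma pq_linear_recurrence k t : (0 < t)%N ->
  pq q (k + t) k =
    \sum_(0 <= z < k) (-1) ^+ (k + z).-1 *: (pq q (t + z) k * mesym k R (k - z)).
Proof.
move=> t_gt0; have kt_gt0 : (0 < k + t)%N by rewrite addn_gt0 t_gt0 orbT.
have := pq_esym_sum k kt_gt0; rewrite mesym_geqnE ?scaler0; last by rewrite -addn1 leq_add2l.
move/eqP; rewrite addr_eq0 => /eqP ->.
rewrite (big_cat_nat t_gt0 (leq_addl k t)) big1_seq ?Monoid.mul1m => [|z]; last first.
  by rewrite mem_index_iota => /andP[_ z_lt]; rewrite mesym_geqnE ?mulr0 ?scaler0 //; lia.
rewrite (big_addn 0 _ t) addnK -sumrN; apply: eq_big_nat => z /andP[_ z_lt].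
rewrite subnDr [(z + t)%N]addnC (signr_predD _ (ltnW z_lt)) ?scaleNr //; lia.
Qed.

End Newton.

Unset Implicit Arguments.

Theorem mainTheorem16 (C : numClosedFieldType) (q : C) (hq : q != 0) (t n : nat) (ht : (0 < t)%N) :
  [/\ pq q t n.+1 =
        mwiden (pq q t n) + q^-1 *: 'X_ord_max ^+ t
        + (q^-1 * (q - q^-1)) *: \sum_(1 <= z < t) mwiden (pq q z n) * 'X_ord_max ^+ (t - z),
      pq q t n.+1 =
        ((-1) ^+ t.-1 * q ^- t * qint q t) *: mesym n.+1 C t
        + \sum_(1 <= z < t) (-1) ^+ (t + z).-1 *: (pq q z n.+1 * mesym n.+1 C (t - z))
    & pq q (n.+1 + t) n.+1 =
        \sum_(0 <= z < n.+1) (-1) ^+ (n.+1 + z).-1 *: (pq q (t + z) n.+1 * mesym n.+1 C (n.+1 - z))].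
Proof.
split; [exact: pq_recr | exact: pq_newton | exact: pq_linear_recurrence].
Qed.
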